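(* Let $E$ be a finite nonempty set, $X\in\mathcal{X}(2)\setminus\mathcal{X}^*(2)$, and let $f:2^E\to\mathbb{N}$ and $S,T\subseteq E$ satisfy: $X=\mathbb{B}_f(2)$; for every $U\subseteq E$ there is $\vec x\in\mathbb{B}_f(2)$ with $x(U)=f(U)$; and $f(S)=f(T)=f(S\cap T)=1$, $f(S\cup T)=2$. Then there are four distinct elements $e_1,e_2,e_3,e_4\in E$ and two vectors $\vec x,\vec y\in\mathbb{B}_f(2)$ such that: (1) $x(e_1)=x(e_2)=1$ with $e_1\in E\setminus(S\cup T)$ and $e_2\in S\cap T$; (2) $y(e_3)=y(e_4)=1$ with $e_3\in S\setminus T$ and $e_4\in T\setminus S$; (3) every $\vec z\in\mathbb{B}_f(2)\setminus\{\vec x,\vec y\}$ with $\mathrm{supp}(\vec z)\subseteq\{e_1,e_2,e_3,e_4\}$ satisfies $\mathrm{supp}(\vec z)\in\{\{e_1,e_3\},\{e_1,e_4\},\{e_1\}\}$.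
   Context: $\mathbb{N}=\{0,1,2,\dots\}$; $x(U)=\sum_{e\in U}x_e$, $x(e)=x_e$; $\mathrm{supp}(\vec x)=\{e: x_e\neq0\}$. For $f:2^E\to\mathbb{N}$, $\mathbb{B}_f(d)=\{\vec x\in\mathbb{N}^E: x(U)\le f(U)\ \forall U\subseteq E,\ x(E)=d\}$. $f$ is strictly positive if $f(U)>0$ for all nonempty $U$, normalized if $f(\emptyset)=0$, monotonic if $f(U)\le f(V)$ for $U\subseteq V$. $\mathcal{X}(d)=\{\mathbb{B}_f(d): f \text{ strictly positive, normalized, monotonic}\}$, $\mathcal{X}^*(d)=\{\mathbb{B}_f(d): f\text{ strictly positive, normalized, monotonic, submodular}\}$. *)

From mathcomp Require Import all_boot.
Set Implicit Arguments. Unset Strict Implicit. Unset Printing Implicit Defensive.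

Definition vsum (E : finType) (x : E -> nat) (U : {set E}) : nat :=
  \sum_(e in U) x e.

Definition supp (E : finType) (x : E -> nat) : {set E} := [set e | x e != 0].

Definition inB (E : finType) (f : {set E} -> nat) (d : nat) (x : E -> nat) : Prop :=
  (forall U : {set E}, vsum x U <= f U) /\ vsum x setT = d.

Definition strictly_positive (E : finType) (f : {set E} -> nat) : Prop :=
  forall U : {set E}, U != set0 -> 0 < f U.
Definition normalized (E : finType) (f : {set E} -> nat) : Prop := f set0 = 0.
Definition monotonic (E : finType) (f : {set E} -> nat) : Prop :=
  forall U V : {set E}, U \subset V -> f U <= f V.
Definition submodular (E : finType) (f : {set E} -> nat) : Prop :=
  forall U V : {set E}, f (U :|: V) + f (U :&: V) <= f U + f V.

Definition inXcal (E : finType) (d : nat) (X : (E -> nat) -> Prop) : Prop :=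
  exists g : {set E} -> nat,
    [/\ strictly_positive g, normalized g, monotonic g &
        forall x, X x <-> inB g d x].
Definition inXcal_star (E : finType) (d : nat) (X : (E -> nat) -> Prop) : Prop :=
  exists g : {set E} -> nat,
    [/\ strictly_positive g, normalized g, monotonic g, submodular g &
        forall x, X x <-> inB g d x].

From mathcomp Require Import all_boot zify.

(* Modularity of U |-> x(U) gives x(S :|: T) + x(S :&: T) = x(S) + x(T) <= 2.
   Hence a vector of B_f(2) tight at S :&: T has one unit in S :&: T and the
   other outside S :|: T, while one tight at S :|: T vanishes on S :&: T and has
   one unit in S :\: T and one in T :\: S.  A vector z of B_f(2) supported on
   these four points obeys z e2 + z e3 <= f S = 1 and z e2 + z e4 <= f T = 1,
   which leaves five possibilities: x, y, and the three listed supports. *)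

Set Implicit Arguments. Unset Strict Implicit.

Section VectorSums.
Variable E : finType.
Implicit Types (x z : E -> nat) (A B U : {set E}) (s : seq E).

Lemma vsum_setID x A B : vsum x A = vsum x (A :&: B) + vsum x (A :\: B).
Proof. exact: big_setID. Qed.

Lemma leq_vsum_subset x A B : A \subset B -> vsum x A <= vsum x B.
Proof. by move=> /setIidPr sAB; rewrite (vsum_setID x B A) sAB leq_addr. Qed.

Lemma vsumUI x A B : vsum x (A :|: B) + vsum x (A :&: B) = vsum x A + vsum x B.
Proof.
rewrite (vsum_setID x (A :|: B) A) setUK setDUl setDv set0U.
by rewrite (vsum_setID x B A) setIC addnAC addnA.
Qed.

Lemma vsum_setC x A : vsum x A + vsum x (~: A) = vsum x setT.
Proof. by rewrite (vsum_setID x setT A) setTI setTD. Qed.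

Lemma vsum_eq1 x U : vsum x U = 1 -> exists2 e, e \in U & x e = 1.
Proof.
move=> xU; have [e /andP[eU xe0] | x0] := pickP [pred e in U | x e != 0].
  exists e => //; have := leq_vsum_subset x (_ : [set e] \subset U).
  by rewrite sub1set xU /vsum big_set1 => /(_ eU); lia.
move: xU; rewrite /vsum big1 // => e eU.
by apply/eqP; have := x0 e; rewrite /= eU => /negbFE.
Qed.

Lemma vsum_set_seq x s : uniq s -> vsum x [set:: s] = \sum_(e <- s) x e.
Proof. by move=> us; rewrite big_uniq //; apply: eq_bigl => e; rewrite inE. Qed.

Lemma vsum_supp_seq x s U : uniq s -> supp x \subset [set:: s] ->
  vsum x U = \sum_(e <- s | e \in U) x e.
Proof.
move=> us /subsetP xs; rewrite -big_filter big_uniq ?filter_uniq //.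
rewrite /vsum (bigID [in s]) /= [X in _ + X]big1 ?addn0.
  by apply: eq_bigl => e; rewrite mem_filter.
move=> e /andP[_ es]; apply/eqP; apply: contraR es => xe.
by have := xs e; rewrite !inE; apply.
Qed.

Lemma supp_sub_seq x s : uniq s -> vsum x setT <= \sum_(e <- s) x e ->
  supp x \subset [set:: s].
Proof.
move=> us xs; apply/subsetP => e; rewrite !inE; apply: contraR => es.
have := leq_vsum_subset x (subsetT [set:: e :: s]).
by rewrite vsum_set_seq /= ?es // big_cons; lia.
Qed.

Lemma supp_filter x s : supp x \subset [set:: s] ->
  supp x = [set:: [seq e <- s | x e != 0]].
Proof.
move=> /subsetP xs; apply/setP => e; rewrite !inE mem_filter.
by apply/idP/andP => [xe | [] //]; split=> //; have := xs e; rewrite !inE; apply.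
Qed.

Lemma eq_vec_on_supp x z s : supp x \subset [set:: s] -> supp z \subset [set:: s] ->
  {in s, x =1 z} -> x =1 z.
Proof.
move=> /subsetP xs /subsetP zs xz e; have [/xz // | es] := boolP (e \in s).
have e0 v : (e \in supp v -> e \in [set:: s]) -> v e = 0.
  by move=> vs; apply/eqP; apply: contraR es => ve; have := vs; rewrite !inE; apply.
by rewrite (e0 _ (xs e)) (e0 _ (zs e)).
Qed.

Lemma supp_two_units x a b : uniq [:: a; b] -> x a = 1 -> x b = 1 ->
  vsum x setT = 2 -> supp x \subset [set:: [:: a; b]].
Proof.
by move=> uab xa xb xtot; apply: supp_sub_seq; rewrite // !big_cons big_nil xa xb xtot.
Qed.

End VectorSums.

Lemma regions_uniq (E : finType) (S T : {set E}) (e1 e2 e3 e4 : E) :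
  e1 \notin S :|: T -> e2 \in S :&: T -> e3 \in S :\: T -> e4 \in T :\: S ->
  uniq [:: e1; e2; e3; e4].
Proof.
rewrite !inE negb_or => /andP[/negbTE e1S /negbTE e1T] /andP[e2S e2T].
move=> /andP[/negbTE e3T e3S] /andP[/negbTE e4S e4T].
apply: (@map_uniq _ _ (fun e => (e \in S, e \in T))).
by rewrite /= e1S e1T e2S e2T e3S e3T e4S e4T.
Qed.

Section TightVectors.
Variables (E : finType) (f : {set E} -> nat) (S T : {set E}).
Hypotheses (fS : f S = 1) (fT : f T = 1).

Lemma meet_tight_units x : inB f 2 x -> vsum x (S :&: T) = 1 ->
  exists e1 e2, [/\ x e1 = 1, x e2 = 1, e1 \notin S :|: T & e2 \in S :&: T].
Proof.
move=> [xle xtot] xI.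
have xU : vsum x (S :|: T) = 1.
  have := leq_vsum_subset x (subset_trans (subsetIl S T) (subsetUl S T)).
  by have := vsumUI x S T; have := xle S; have := xle T; rewrite fS fT; lia.
have [e2 e2I x2] := vsum_eq1 xI.
have [e1 e1C x1] : exists2 e, e \in ~: (S :|: T) & x e = 1.
  by apply: vsum_eq1; have := vsum_setC x (S :|: T); lia.
by exists e1, e2; split=> //; rewrite inE in e1C.
Qed.

Lemma join_tight_units y : inB f 2 y -> vsum y (S :|: T) = 2 ->
  exists e3 e4, [/\ y e3 = 1, y e4 = 1, e3 \in S :\: T & e4 \in T :\: S].
Proof.
move=> [yle _] yU.
have := vsumUI y S T; have := yle S; have := yle T; rewrite fS fT => yT yS yUI.
have [e3 e3D y3] : exists2 e, e \in S :\: T & y e = 1.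
  by apply: vsum_eq1; have := vsum_setID y S T; lia.
have [e4 e4D y4] : exists2 e, e \in T :\: S & y e = 1.
  by apply: vsum_eq1; have := vsum_setID y T S; rewrite setIC; lia.
by exists e3, e4.
Qed.

Lemma four_point_values e1 e2 e3 e4 z :
    e1 \notin S :|: T -> e2 \in S :&: T -> e3 \in S :\: T -> e4 \in T :\: S ->
    inB f 2 z -> supp z \subset [set:: [:: e1; e2; e3; e4]] ->
  (z e1 = 1 /\ z e2 = 1 /\ z e3 = 0 /\ z e4 = 0) \/
  (z e1 = 0 /\ z e2 = 0 /\ z e3 = 1 /\ z e4 = 1) \/
  (z e1 = 1 /\ z e2 = 0 /\ z e3 = 1 /\ z e4 = 0) \/
  (z e1 = 1 /\ z e2 = 0 /\ z e3 = 0 /\ z e4 = 1) \/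
  (z e1 = 2 /\ z e2 = 0 /\ z e3 = 0 /\ z e4 = 0).
Proof.
move=> r1 r2 r3 r4 [zle ztot] zs.
have sumE U := vsum_supp_seq U (regions_uniq r1 r2 r3 r4) zs.
move: r1 r2 r3 r4 (zle S) (zle T) ztot; rewrite fS fT !sumE !big_cons !big_nil !inE.
rewrite negb_or => /andP[/negbTE -> /negbTE ->] /andP[-> ->].
move=> /andP[/negbTE -> ->] /andP[/negbTE -> ->] /=.
by clear; lia.
Qed.

Lemma small_support_cases e1 e2 e3 e4 x y z :
    e1 \notin S :|: T -> e2 \in S :&: T -> e3 \in S :\: T -> e4 \in T :\: S ->
    inB f 2 x -> x e1 = 1 -> x e2 = 1 -> inB f 2 y -> y e3 = 1 -> y e4 = 1 ->
    inB f 2 z -> supp z \subset [set e1; e2; e3; e4] ->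
  z =1 x \/ z =1 y \/
  supp z = [set e1; e3] \/ supp z = [set e1; e4] \/ supp z = [set e1].
Proof.
move=> r1 r2 r3 r4 [_ xtot] x1 x2 [_ ytot] y3 y4 zB.
rewrite (_ : [set e1; e2; e3; e4] = [set:: [:: e1; e2; e3; e4]]); last first.
  by apply/setP => e; rewrite !inE !orbA.
move=> zs; have := regions_uniq r1 r2 r3 r4.
rewrite -[[:: e1; e2; e3; e4]]/([:: e1; e2] ++ [:: e3; e4]) cat_uniq.
case/and3P=> u12 _ u34.
have xs := supp_two_units u12 x1 x2 xtot; have ys := supp_two_units u34 y3 y4 ytot.
have suppE s : [seq e <- [:: e1; e2; e3; e4] | z e != 0] = s -> supp z = [set:: s].
  by rewrite (supp_filter zs) => ->.
have setE a b : [set:: [:: a; b]] = [set a; b] by rewrite !set_cons set_nil setU0.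
case: (four_point_values r1 r2 r3 r4 zB zs) => [|[|[|[|]]]] [z1 [z2 [z3 z4]]].
- left; apply: (eq_vec_on_supp (s := [:: e1; e2])) => //.
    by rewrite (suppE [:: e1; e2]) //= z1 z2 z3 z4.
  by move=> e; rewrite !inE => /orP[] /eqP ->; rewrite ?z1 ?z2 ?x1 ?x2.
- right; left; apply: (eq_vec_on_supp (s := [:: e3; e4])) => //.
    by rewrite (suppE [:: e3; e4]) //= z1 z2 z3 z4.
  by move=> e; rewrite !inE => /orP[] /eqP ->; rewrite ?z3 ?z4 ?y3 ?y4.
- by do 2 right; left; rewrite (suppE [:: e1; e3]) ?setE //= z1 z2 z3 z4.
- by do 3 right; left; rewrite (suppE [:: e1; e4]) ?setE //= z1 z2 z3 z4.
- by do 4 right; rewrite (suppE [:: e1]) ?set_cons ?set_nil ?setU0 //= z1 z2 z3 z4.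
Qed.

End TightVectors.

Theorem lemma6p3 (E : finType) (X : (E -> nat) -> Prop)
    (f : {set E} -> nat) (S T : {set E}) :
  0 < #|E| ->
  inXcal 2 X -> ~ inXcal_star 2 X ->
  (forall x, X x <-> inB f 2 x) ->
  (forall U : {set E}, exists x, inB f 2 x /\ vsum x U = f U) ->
  f S = 1 -> f T = 1 -> f (S :&: T) = 1 -> f (S :|: T) = 2 ->
  exists (e1 e2 e3 e4 : E) (x y : E -> nat),
    [/\ uniq [:: e1; e2; e3; e4], inB f 2 x /\ inB f 2 y,
      [/\ x e1 = 1, x e2 = 1, e1 \notin S :|: T & e2 \in S :&: T],
      [/\ y e3 = 1, y e4 = 1, e3 \in S :\: T & e4 \in T :\: S] &
      forall z : E -> nat, inB f 2 z -> ~ (z =1 x) -> ~ (z =1 y) ->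
        supp z \subset [set e1; e2; e3; e4] ->
        supp z = [set e1; e3] \/ supp z = [set e1; e4] \/ supp z = [set e1]].
Proof.
move=> _ _ _ _ tight fS fT fI fU.
have [x [xB xI]] := tight (S :&: T); rewrite fI in xI.
have [y [yB yU]] := tight (S :|: T); rewrite fU in yU.
have [e1 [e2 [x1 x2 r1 r2]]] := meet_tight_units fS fT xB xI.
have [e3 [e4 [y3 y4 r3 r4]]] := join_tight_units fS fT yB yU.
exists e1, e2, e3, e4, x, y; split=> //; first exact: regions_uniq r1 r2 r3 r4.
move=> z zB zx zy zs.
by case: (small_support_cases fS fT r1 r2 r3 r4 xB x1 x2 yB y3 y4 zB zs) => [/zx | [/zy |]].
Qed.
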